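(* For all real numbers $a,b>0$ and $0\le v\le 1$, $$G_v(a,b)\le \left\{1+\frac{\mu^2}{2}\left(\log a-\log b\right)^2\right\}G_v(a,b)\le A_v(a,b),$$ where $\mu:=\min\{1-v,v\}$.
   Context: For $a,b>0$ and $0\le v\le 1$: $A_v(a,b):=(1-v)a+vb$ is the weighted arithmetic mean and $G_v(a,b):=a^{1-v}b^v$ is the weighted geometric mean. *)

From Stdlib Require Import Reals.
Open Scope R_scope.

Definition Amean (v a b : R) : R := (1 - v) * a + v * b.

Definition Gmean (v a b : R) : R := Rpower a (1 - v) * Rpower b v.

(** Write [t = ln a - ln b].  Dividing by [G_v(a,b)] turns the claim into
    [1 + mu^2 t^2 / 2 <= (1 - v) e^(v t) + v e^(-(1 - v) t)], and swapping
    [v] with [1 - v] reduces it to [t >= 0].  There both exponentials are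
    replaced by their Taylor polynomials of degree three; the cubic term has
    the right sign when [v >= 1 - v]; otherwise it is absorbed by the surplus
    [v (1 - 2v) t^2 / 2] of the quadratic term as long as [(1 - v) t <= 3],
    and beyond that the first order bound [e^(-x) >= 1 - x] suffices. *)

From Stdlib Require Import Reals Lra.
From Coquelicot Require Import Coquelicot.
Open Scope R_scope.

Lemma le_of_derive_nonneg (f f' : R -> R) (x y : R) :
  x <= y ->
  (forall c, x <= c <= y -> is_derive f c (f' c)) ->
  (forall c, x <= c <= y -> 0 <= f' c) ->
  f x <= f y.
Proof.
  intros Hxy Hd Hpos.
  destruct (Req_dec x y) as [<-|Hne]; [lra|].
  destruct (MVT_cor3 f f' x y) as [c [Hxc [Hcy ->]]]; [lra| |].
  - intros c Hxc Hcy. apply is_derive_Reals, Hd. lra.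
  - assert (0 <= f' c) by (apply Hpos; lra). nra.
Qed.

Lemma exp_ge_taylor3 x : 0 <= x -> 1 + x + x ^ 2 / 2 + x ^ 3 / 6 <= exp x.
Proof.
  intros Hx. pose proof (exp_ge_taylor x 3 Hx) as H.
  simpl in H. lra.
Qed.

Lemma exp_opp_le_taylor2 z : 0 <= z -> exp (- z) <= 1 - z + z ^ 2 / 2.
Proof.
  intros Hz.
  set (f t := 1 - t + t ^ 2 / 2 - exp (- t)).
  assert (H : f 0 <= f z).
  { apply (le_of_derive_nonneg f (fun t => - 1 + t + exp (- t)) 0 z Hz).
    - intros c _. unfold f. auto_derive; [easy | field].
    - intros c _. pose proof (exp_ineq1_le (- c)). lra. }
  unfold f in H. rewrite Ropp_0, exp_0 in H. lra.
Qed.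

Lemma exp_opp_ge_taylor3 z :
  0 <= z -> 1 - z + z ^ 2 / 2 - z ^ 3 / 6 <= exp (- z).
Proof.
  intros Hz.
  set (f t := exp (- t) - (1 - t + t ^ 2 / 2 - t ^ 3 / 6)).
  assert (H : f 0 <= f z).
  { apply (le_of_derive_nonneg f (fun t => 1 - t + t ^ 2 / 2 - exp (- t)) 0 z Hz).
    - intros c _. unfold f. auto_derive; [easy | field].
    - intros c Hc. pose proof (exp_opp_le_taylor2 c ltac:(lra)). lra. }
  unfold f in H. rewrite Ropp_0, exp_0 in H. lra.
Qed.

Lemma Amean_scale v c x y : Amean v (c * x) (c * y) = c * Amean v x y.
Proof. unfold Amean. ring. Qed.

Lemma Amean_swap v x y : Amean (1 - v) y x = Amean v x y.
Proof. unfold Amean. ring. Qed.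

Lemma Gmean_pos v a b : 0 < Gmean v a b.
Proof. apply Rmult_lt_0_compat; apply exp_pos. Qed.

Lemma Gmean_mul_exp_l v a b :
  0 < a -> Gmean v a b * exp (v * (ln a - ln b)) = a.
Proof.
  intros Ha. unfold Gmean, Rpower. rewrite <- !exp_plus.
  replace ((1 - v) * ln a + v * ln b + v * (ln a - ln b)) with (ln a) by ring.
  now apply exp_ln.
Qed.

Lemma Gmean_mul_exp_r v a b :
  0 < b -> Gmean v a b * exp (- ((1 - v) * (ln a - ln b))) = b.
Proof.
  intros Hb. unfold Gmean, Rpower. rewrite <- !exp_plus.
  replace ((1 - v) * ln a + v * ln b + - ((1 - v) * (ln a - ln b)))
    with (ln b) by ring.
  now apply exp_ln.
Qed.

Section ExpMean.

Variables v s : R.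
Hypothesis Hv : 0 <= v <= 1.
Hypothesis Hs : 0 <= s.

Lemma Amean_exp_ge_cubic :
  1 + v * (1 - v) * s ^ 2 / 2 + v * (1 - v) * (2 * v - 1) * s ^ 3 / 6
    <= Amean v (exp (v * s)) (exp (- ((1 - v) * s))).
Proof.
  assert (Hp := exp_ge_taylor3 (v * s) ltac:(nra)).
  assert (Hm := exp_opp_ge_taylor3 ((1 - v) * s) ltac:(nra)).
  apply Rle_trans with
    ((1 - v) * (1 + v * s + (v * s) ^ 2 / 2 + (v * s) ^ 3 / 6)
     + v * (1 - (1 - v) * s + ((1 - v) * s) ^ 2 / 2 - ((1 - v) * s) ^ 3 / 6)).
  - right. field.
  - apply Rplus_le_compat; apply Rmult_le_compat_l; lra.
Qed.

Lemma Amean_exp_ge_tail :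
  1 + (1 - v) * v ^ 2 * s ^ 2 / 2 + (1 - v) * v ^ 3 * s ^ 3 / 6
    <= Amean v (exp (v * s)) (exp (- ((1 - v) * s))).
Proof.
  assert (Hp := exp_ge_taylor3 (v * s) ltac:(nra)).
  assert (Hm := exp_ineq1_le (- ((1 - v) * s))).
  apply Rle_trans with
    ((1 - v) * (1 + v * s + (v * s) ^ 2 / 2 + (v * s) ^ 3 / 6)
     + v * (1 + - ((1 - v) * s))).
  - right. field.
  - apply Rplus_le_compat; apply Rmult_le_compat_l; lra.
Qed.

Lemma Amean_exp_ge_nonneg :
  1 + Rmin (1 - v) v ^ 2 / 2 * s ^ 2
    <= Amean v (exp (v * s)) (exp (- ((1 - v) * s))).
Proof.
  destruct (Rle_dec (1 - v) v) as [Hge|Hlt].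
  - rewrite Rmin_left by lra.
    eapply Rle_trans; [|exact Amean_exp_ge_cubic].
    assert (0 <= (1 - v) * s ^ 2 * (2 * v - 1)) by (apply Rmult_le_pos; nra).
    assert (0 <= v * (1 - v) * (2 * v - 1) * s ^ 3).
    { apply Rmult_le_pos; [apply Rmult_le_pos|]; nra. }
    nra.
  - rewrite Rmin_right by lra.
    destruct (Rle_dec ((1 - v) * s) 3).
    + eapply Rle_trans; [|exact Amean_exp_ge_cubic].
      assert (0 <= v * s ^ 2 * (1 - 2 * v) * (1 - (1 - v) * s / 3)).
      { apply Rmult_le_pos; [apply Rmult_le_pos|]; nra. }
      nra.
    + eapply Rle_trans; [|exact Amean_exp_ge_tail].
      assert (0 <= v ^ 3 * s ^ 2 * ((1 - v) * s / 3 - 1)).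
      { apply Rmult_le_pos; [apply Rmult_le_pos|]; nra. }
      nra.
Qed.

End ExpMean.

Lemma Amean_exp_ge v t :
  0 <= v <= 1 ->
  1 + Rmin (1 - v) v ^ 2 / 2 * t ^ 2
    <= Amean v (exp (v * t)) (exp (- ((1 - v) * t))).
Proof.
  intros Hv.
  destruct (Rle_dec 0 t) as [Ht|Ht]; [now apply Amean_exp_ge_nonneg|].
  assert (H := Amean_exp_ge_nonneg (1 - v) (- t) ltac:(lra) ltac:(lra)).
  rewrite Amean_swap, Rmin_comm in H.
  replace (1 - (1 - v)) with v in H by ring.
  replace (- (v * - t)) with (v * t) in H by ring.
  replace ((1 - v) * - t) with (- ((1 - v) * t)) in H by ring.
  replace ((- t) ^ 2) with (t ^ 2) in H by ring.
  exact H.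
Qed.

Theorem theorem2p1 (a b v : R) :
  0 < a -> 0 < b -> 0 <= v <= 1 ->
  let mu := Rmin (1 - v) v in
  Gmean v a b <= (1 + mu ^ 2 / 2 * (ln a - ln b) ^ 2) * Gmean v a b /\
  (1 + mu ^ 2 / 2 * (ln a - ln b) ^ 2) * Gmean v a b <= Amean v a b.
Proof.
  intros Ha Hb Hv mu.
  assert (HA : Amean v a b = Gmean v a b
           * Amean v (exp (v * (ln a - ln b)))
                     (exp (- ((1 - v) * (ln a - ln b))))).
  { now rewrite <- Amean_scale, Gmean_mul_exp_l, Gmean_mul_exp_r. }
  assert (HG := Gmean_pos v a b).
  assert (0 <= mu ^ 2 / 2 * (ln a - ln b) ^ 2).
  { apply Rmult_le_pos; [|apply pow2_ge_0]. pose proof (pow2_ge_0 mu). lra. }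
  split; [nra|].
  rewrite HA, (Rmult_comm _ (Gmean v a b)).
  apply Rmult_le_compat_l; [lra|].
  now apply Amean_exp_ge.
Qed.
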